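(* Let $\varphi_0\in\mathbb{R}$ and let $v$ be a smooth function with $v(\varphi)>0$ and $v'(\varphi)>0$ for all $\varphi\ge\varphi_0$, and suppose that $v$ grows faster than $e^{2\varphi}$ as $\varphi\to\infty$, i.e. $v(\varphi)e^{-2\varphi}\to\infty$. Then every solution of $h'=\sqrt{h^2-v}$ with initial value $h(\varphi_0)=h_0>\sqrt{v(\varphi_0)}$ reaches the curve $h=\sqrt{v(\varphi)}$ at a finite value of $\varphi$ (i.e., all solutions are of type A), and consequently there is no separatrix.
   Context: A solution of $h'=\sqrt{h^2-v}$ in $R_0=\{(\varphi,h):\varphi\ge\varphi_0,\ h>\sqrt{v(\varphi)}\}$ is of type A if it leaves $R_0$ by reaching the lower boundary $h=\sqrt{v(\varphi)}$ at a finite $\varphi$, and of type B if it remains in $R_0$ for all $\varphi>\varphi_0$. A separatrix exists only if both types occur; it is then the solution whose initial value $h(\varphi_0)$ equals the common boundary value $r$ between the initial values of type-A solutions (below $r$) and type-B solutions (above $r$). *)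

From Stdlib Require Import Reals.
From Coquelicot Require Import Coquelicot.
Open Scope R_scope.

Definition smooth_from (v : R -> R) (phi0 : R) : Prop :=
  forall (n : nat) (x : R), phi0 <= x -> ex_derive (Derive_n v n) x.

Definition ode_rhs (v : R -> R) (x y : R) : R := sqrt (y ^ 2 - v x).

Definition typeA (v : R -> R) (phi0 : R) (h : R -> R) (phi1 : R) : Prop :=
  phi0 < phi1 /\
  filterlim h (at_right phi0) (locally (h phi0)) /\
  filterlim h (at_left phi1) (locally (h phi1)) /\
  (forall x, phi0 < x < phi1 -> is_derive h x (ode_rhs v x (h x))) /\
  (forall x, phi0 <= x < phi1 -> sqrt (v x) < h x) /\
  h phi1 = sqrt (v phi1).

Definition typeB (v : R -> R) (phi0 : R) (h : R -> R) : Prop :=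
  filterlim h (at_right phi0) (locally (h phi0)) /\
  (forall x, phi0 < x -> is_derive h x (ode_rhs v x (h x))) /\
  (forall x, phi0 <= x -> sqrt (v x) < h x).

(* A separatrix exists only if both types occur; it is the solution whose
   initial value is the common boundary r between the initial values of
   type-A solutions (below r) and type-B solutions (above r). *)
Definition has_separatrix (v : R -> R) (phi0 : R) : Prop :=
  (exists h phi1, typeA v phi0 h phi1) /\
  (exists h, typeB v phi0 h) /\
  exists r : R,
    (forall h phi1, typeA v phi0 h phi1 -> h phi0 <= r) /\
    (forall h, typeB v phi0 h -> r <= h phi0) /\
    (forall h0, sqrt (v phi0) < h0 < r -> exists h phi1, h phi0 = h0 /\ typeA v phi0 h phi1) /\
    (forall h0, r < h0 -> exists h, h phi0 = h0 /\ typeB v phi0 h).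

From Stdlib Require Import Reals Lra Lia Classical.
From Coquelicot Require Import Coquelicot.
Open Scope R_scope.

(* Along a solution, h' = sqrt (h^2 - v) <= h, so h(phi) <= h0 e^(phi - phi0) by
   Gronwall, while v eventually exceeds (h0 e^(phi - phi0))^2: no solution can stay
   above sqrt v forever, which excludes type B and hence a separatrix.
   Solutions do exist although the field is not Lipschitz where h^2 = v: it is
   nondecreasing in h, so the Picard iterates started at the constant h0 increase;
   they are bounded by h0 e^(b - phi0) and equi-Lipschitz, hence converge uniformly
   on [phi0, b] to a solution, which has to meet sqrt v before b. *)

Definition lipschitz (f : R -> R) (L : R) : Prop :=
  forall x y, Rabs (f x - f y) <= L * Rabs (x - y).

Lemma lipschitz_continuous (f : R -> R) (L x : R) : lipschitz f L -> continuous f x.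
Proof.
intros Hf. apply filterlim_locally. intros eps.
assert (HL : 0 < Rabs L + 1) by (generalize (Rabs_pos L); lra).
set (d := eps / (Rabs L + 1)).
assert (Hd : 0 < d) by (apply Rdiv_lt_0_compat; [apply cond_pos | exact HL]).
assert (Heps : pos eps = (Rabs L + 1) * d) by (unfold d; field; lra).
exists (mkposreal _ Hd). intros y Hy.
change (Rabs (y - x) < d) in Hy. change (Rabs (f y - f x) < eps).
assert (HLy : L * Rabs (y - x) <= Rabs L * Rabs (y - x))
  by (apply Rmult_le_compat_r; [apply Rabs_pos | apply RRle_abs]).
generalize (Hf y x) (Rabs_pos L) (Rabs_pos (y - x)). nra.
Qed.

Lemma sqrt_sub_le (p q : R) : p <= q -> sqrt q - sqrt p <= sqrt (q - p).
Proof.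
intros Hpq. destruct (Rle_lt_dec 0 p) as [Hp | Hp].
- assert (0 <= sqrt p) by apply sqrt_pos.
  assert (0 <= sqrt (q - p)) by apply sqrt_pos.
  enough (sqrt q <= sqrt p + sqrt (q - p)) by lra.
  rewrite <- (sqrt_pow2 (sqrt p + sqrt (q - p))) by lra. apply sqrt_le_1_alt.
  replace ((sqrt p + sqrt (q - p)) ^ 2)
    with (sqrt p ^ 2 + sqrt (q - p) ^ 2 + 2 * sqrt p * sqrt (q - p)) by ring.
  rewrite !pow2_sqrt by lra. nra.
- rewrite (sqrt_neg_0 p) by lra.
  assert (sqrt q <= sqrt (q - p)) by (apply sqrt_le_1_alt; lra). lra.
Qed.

Lemma le_of_derive_nonpos (p dp : R -> R) (a x : R) : a < x ->
  filterlim p (at_right a) (locally (p a)) -> continuous p x ->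
  (forall s, a < s < x -> is_derive p s (dp s) /\ dp s <= 0) ->
  p x <= p a.
Proof.
intros Hax Hright Hx Hd.
assert (Hdecr : forall u, a < u < x -> p x <= p u).
{ intros u Hu.
  (* [MVT_gen] may return an endpoint, where [dp] is unconstrained. *)
  destruct (MVT_gen p u x (fun s => Rmin 0 (dp s))) as [c [_ Hmvt]].
  - rewrite Rmin_left, Rmax_right by lra. intros s Hs.
    destruct (Hd s ltac:(lra)) as [Hs1 Hs2]. rewrite Rmin_right by lra. exact Hs1.
  - rewrite Rmin_left, Rmax_right by lra. intros s Hs.
    apply continuity_pt_filterlim.
    destruct (Req_dec s x) as [-> | Hsx]; [exact Hx |].
    apply (ex_derive_continuous p). exists (dp s). apply Hd. lra.
  - assert (Rmin 0 (dp c) * (x - u) <= 0)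
      by (apply Rmult_le_0_r; [apply Rmin_l | lra]).
    lra. }
assert (Hev : at_right a (fun u => p x <= p u)).
{ assert (Hxa : 0 < x - a) by lra.
  exists (mkposreal _ Hxa). intros u Hu Hau.
  change (Rabs (u - a) < x - a) in Hu. apply Rabs_lt_between' in Hu.
  apply Hdecr. lra. }
exact (filterlim_le (fun _ => p x) p (p x) (p a) Hev (filterlim_const _) Hright).
Qed.

Lemma le_exp_of_derive_le (h d : R -> R) (a x : R) : a < x ->
  filterlim h (at_right a) (locally (h a)) -> continuous h x ->
  (forall s, a < s < x -> is_derive h s (d s) /\ d s <= h s) ->
  h x <= h a * exp (x - a).
Proof.
intros Hax Hright Hx Hd.
assert (Hexp : forall s, is_derive (fun s => exp (- s)) s (- exp (- s)))
  by (intros s; auto_derive; [auto | ring]).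
assert (Hexp_cont : forall s, continuous (fun s => exp (- s)) s)
  by (intros s; apply (ex_derive_continuous (fun s => exp (- s))); eexists; apply Hexp).
set (p := fun s => h s * exp (- s)).
assert (Hp : p x <= p a).
{ apply (le_of_derive_nonpos p (fun s => (d s - h s) * exp (- s)) a x Hax).
  - exact (filterlim_comp_2 h (fun s => exp (- s)) Rmult Hright
      (filterlim_filter_le_1 _ (filter_le_within _) (Hexp_cont a))
      (filterlim_mult (K := R_AbsRing) (h a) (exp (- a)))).
  - exact (continuous_mult h (fun s => exp (- s)) x Hx (Hexp_cont x)).
  - intros s Hs. destruct (Hd s Hs) as [Hhs Hle]. split.
    + replace ((d s - h s) * exp (- s)) with (d s * exp (- s) + h s * (- exp (- s)))
        by ring.
      exact (is_derive_mult h (fun s => exp (- s)) s _ _ Hhs (Hexp s) Rmult_comm).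
    + apply Rmult_le_0_r; [lra | apply Rlt_le, exp_pos]. }
unfold p in Hp.
assert (Ex : h x = h x * exp (- x) * exp x)
  by (rewrite Rmult_assoc, <- exp_plus, Rplus_opp_l, exp_0; ring).
assert (Ea : h a * exp (x - a) = h a * exp (- a) * exp x)
  by (rewrite Rmult_assoc, <- exp_plus; do 2 f_equal; ring).
rewrite Ex, Ea. apply Rmult_le_compat_r; [apply Rlt_le, exp_pos | exact Hp].
Qed.

Lemma exists_first_root (D : R -> R) (a b : R) : a < b ->
  (forall x, a <= x <= b -> continuous D x) -> 0 < D a -> D b < 0 ->
  exists m, a < m <= b /\ D m = 0 /\ forall y, a <= y < m -> 0 < D y.
Proof.
intros Hab HD Ha Hb.
set (S := fun x => a <= x <= b /\ forall y, a <= y <= x -> 0 < D y).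
assert (Sa : S a) by (split; [lra | intros y Hy; replace y with a by lra; exact Ha]).
destruct (completeness S) as [m [Hub Hlub]].
{ exists b. intros x [Hx _]. lra. }
{ exists a. exact Sa. }
assert (Ham : a <= m) by (apply Hub, Sa).
assert (Hmb : m <= b) by (apply Hlub; intros x [Hx _]; lra).
assert (Hbelow : forall y, a <= y < m -> 0 < D y).
{ intros y Hy. destruct (classic (exists x, S x /\ y < x)) as [[x [[_ Hx] Hyx]] | Hn].
  - apply Hx. lra.
  - enough (m <= y) by lra. apply Hlub. intros x Hx.
    apply Rnot_lt_le. intros Hyx. apply Hn. exists x. split; assumption. }
assert (Hm_le : D m <= 0).
{ apply Rnot_lt_le. intros Hpos.
  destruct (HD m (conj Ham Hmb) (fun z => 0 < z) (open_gt 0 (D m) Hpos)) as [del Hdel].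
  assert (Hmb' : m < b) by (destruct (Req_dec m b) as [E | E]; [subst; lra | lra]).
  assert (Hdel0 := cond_pos del).
  set (x := Rmin (m + del / 2) b).
  assert (Hmx : m < x) by (apply Rmin_glb_lt; lra).
  assert (Hx : x <= m + del / 2 /\ x <= b) by (split; [apply Rmin_l | apply Rmin_r]).
  assert (Sx : S x).
  { split; [lra |].
    intros y Hy. destruct (Rlt_le_dec y m) as [Hym | Hym]; [apply Hbelow; lra |].
    apply Hdel. change (Rabs (y - m) < del). apply Rabs_lt_between'. lra. }
  generalize (Hub x Sx). lra. }
assert (Ham' : a < m) by (destruct (Req_dec a m) as [E | E]; [subst; lra | lra]).
assert (Hm_ge : 0 <= D m).
{ apply Rnot_lt_le. intros Hneg.
  destruct (HD m (conj Ham Hmb) (fun z => z < 0) (open_lt 0 (D m) Hneg)) as [del Hdel].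
  assert (Hdel0 := cond_pos del).
  set (y := Rmax a (m - del / 2)).
  assert (Hy : a <= y < m) by (split; [apply Rmax_l | apply Rmax_lub_lt; lra]).
  assert (m - del / 2 <= y) by apply Rmax_r.
  assert (D y < 0).
  { apply Hdel. change (Rabs (y - m) < del). apply Rabs_lt_between'. lra. }
  generalize (Hbelow y Hy). lra. }
exists m. split; [lra | split; [lra | exact Hbelow]].
Qed.

Lemma is_derive_plus_RInt (k : R -> R) (c a x : R) : (forall s, continuous k s) ->
  is_derive (fun y => c + RInt k a y) x (k x).
Proof.
intros Hk. replace (k x) with (0 + k x) by ring.
apply (is_derive_plus (fun _ => c) (fun y => RInt k a y) x zero (k x)).
- apply is_derive_const.
- apply (is_derive_RInt (V := R_NormedModule) k _ a x); [| apply Hk].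
  apply filter_forall. intros y. apply (RInt_correct (V := R_CompleteNormedModule)).
  apply ex_RInt_continuous. intros; apply Hk.
Qed.

Lemma RInt_lipschitz (k : R -> R) (M a : R) : (forall s, continuous k s) ->
  (forall s, Rabs (k s) <= M) -> lipschitz (fun x => RInt k a x) M.
Proof.
intros Hk HM x y.
assert (Hex : forall c d, ex_RInt k c d).
{ intros c d. apply (ex_RInt_continuous (V := R_CompleteNormedModule)). intros; apply Hk. }
replace (RInt k a x - RInt k a y) with (RInt k y x).
2: { assert (E := RInt_Chasles k a y x (Hex a y) (Hex y x)).
     change (RInt k a y + RInt k y x = RInt k a x) in E. lra. }
destruct (Rle_lt_dec y x) as [Hyx | Hxy].
- rewrite (Rabs_right (x - y)) by lra. rewrite Rmult_comm.
  apply abs_RInt_le_const; [lra | apply Hex | intros; apply HM].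
- rewrite <- opp_RInt_swap by apply Hex. change (Rabs (- RInt k x y) <= M * Rabs (x - y)).
  rewrite Rabs_Ropp, Rabs_minus_sym, (Rabs_right (y - x)) by lra. rewrite Rmult_comm.
  apply abs_RInt_le_const; [lra | apply Hex | intros; apply HM].
Qed.

Definition unif_cvg_on (u : nat -> R -> R) (g : R -> R) (a b : R) : Prop :=
  forall eps, 0 < eps ->
    eventually (fun n => forall x, a <= x <= b -> Rabs (u n x - g x) <= eps).

Lemma eventually_forall_le (P : nat -> nat -> Prop) (K : nat) :
  (forall k, eventually (P k)) -> eventually (fun n => forall k, (k <= K)%nat -> P k n).
Proof.
intros HP. induction K as [| K IH].
- apply (filter_imp (P 0%nat)); [| apply HP].
  intros n Hn k Hk. replace k with 0%nat by lia. exact Hn.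
- apply (filter_imp (fun n => (forall k, (k <= K)%nat -> P k n) /\ P (S K) n)).
  + intros n [Hn HSn] k Hk. destruct (Nat.eq_dec k (S K)) as [-> | Hne]; [exact HSn |].
    apply Hn. lia.
  + apply filter_and; [exact IH | apply HP].
Qed.

Lemma grid_cover (a d x : R) (K : nat) : 0 < d -> a <= x <= a + INR K * d ->
  exists k, (k <= K)%nat /\ Rabs (x - (a + INR k * d)) <= d.
Proof.
intros Hd. induction K as [| K IH]; intros Hx.
- exists 0%nat. split; [lia |]. simpl in *. apply Rabs_le. lra.
- rewrite S_INR in Hx. destruct (Rle_lt_dec x (a + INR K * d)) as [Hle | Hlt].
  + destruct IH as [k [Hk Hkx]]; [lra |]. exists k. split; [lia | exact Hkx].
  + exists (S K). split; [lia |]. rewrite S_INR. apply Rabs_le. lra.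
Qed.

Lemma unif_cvg_on_equilipschitz (u : nat -> R -> R) (g : R -> R) (L a b : R) :
  (forall n, lipschitz (u n) L) -> lipschitz g L ->
  (forall x, is_lim_seq (fun n => u n x) (g x)) -> unif_cvg_on u g a b.
Proof.
intros Hu Hg Hlim eps Heps.
assert (HL : 0 < Rabs L + 1) by (generalize (Rabs_pos L); lra).
set (d := eps / (4 * (Rabs L + 1))).
assert (Hd : 0 < d) by (unfold d; apply Rdiv_lt_0_compat; lra).
assert (HLd : Rabs L * d <= eps / 4).
{ unfold d. replace (eps / 4) with ((Rabs L + 1) * (eps / (4 * (Rabs L + 1)))) by (field; lra).
  apply Rmult_le_compat_r; [apply Rlt_le, Hd | lra]. }
destruct (INR_unbounded ((b - a) / d)) as [K HK].
assert (Hgrid : forall k, eventually (fun n =>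
  Rabs (u n (a + INR k * d) - g (a + INR k * d)) < eps / 2)).
{ intros k. assert (Heps2 : 0 < eps / 2) by lra.
  exact (proj2 (is_lim_seq_spec _ _) (Hlim (a + INR k * d)) (mkposreal _ Heps2)). }
eapply filter_imp; [| exact (eventually_forall_le _ K Hgrid)].
intros n Hn x Hx.
destruct (grid_cover a d x K Hd) as [k [Hk Hxk]].
{ split; [lra |].
  enough ((b - a) <= INR K * d) by lra.
  apply Rlt_le. apply (Rmult_lt_compat_r d) in HK; [| exact Hd].
  unfold Rdiv in HK. rewrite Rmult_assoc, Rinv_l, Rmult_1_r in HK by lra. lra. }
specialize (Hn k Hk). cbv beta in Hn.
set (y := a + INR k * d) in *.
assert (Hlip : forall f, lipschitz f L -> Rabs (f x - f y) <= eps / 4).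
{ intros f Hf. apply (Rle_trans _ _ _ (Hf x y)).
  apply (Rle_trans _ (Rabs L * d)); [| exact HLd].
  apply (Rle_trans _ (Rabs L * Rabs (x - y))).
  - apply Rmult_le_compat_r; [apply Rabs_pos | apply RRle_abs].
  - apply Rmult_le_compat_l; [apply Rabs_pos | exact Hxk]. }
generalize (Hlip _ (Hu n)) (Hlip _ Hg).
generalize (Rabs_triang (u n x - u n y) (u n y - g x)) (Rabs_triang (u n y - g y) (g y - g x)).
rewrite (Rabs_minus_sym (g y)).
replace (u n x - u n y + (u n y - g x)) with (u n x - g x) by ring.
replace (u n y - g y + (g y - g x)) with (u n y - g x) by ring.
lra.
Qed.

Lemma lipschitz_of_pointwise_lim (u : nat -> R -> R) (g : R -> R) (L : R) :
  (forall n, lipschitz (u n) L) ->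
  (forall x, is_lim_seq (fun n => u n x) (g x)) -> lipschitz g L.
Proof.
intros Hu Hlim x y.
assert (Habs := is_lim_seq_abs _ _ (is_lim_seq_minus' _ _ _ _ (Hlim x) (Hlim y))).
exact (is_lim_seq_le _ _ _ _ (fun n => Hu n x y) Habs (is_lim_seq_const _)).
Qed.

Lemma is_lim_seq_RInt_unif (k : nat -> R -> R) (f : R -> R) (a c : R) : a <= c ->
  (forall n, ex_RInt (k n) a c) -> ex_RInt f a c -> unif_cvg_on k f a c ->
  is_lim_seq (fun n => RInt (k n) a c) (RInt f a c).
Proof.
intros Hac Hk Hf Hunif. apply is_lim_seq_spec. intros eps.
assert (Heps := cond_pos eps).
set (e := eps / (c - a + 1)).
assert (He : 0 < e) by (unfold e; apply Rdiv_lt_0_compat; lra).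
eapply filter_imp; [| exact (Hunif e He)]. intros n Hn.
assert (E := RInt_minus (k n) f a c (Hk n) Hf).
change (RInt (fun s => k n s - f s) a c = RInt (k n) a c - RInt f a c) in E.
rewrite <- E.
apply (Rle_lt_trans _ ((c - a) * e)).
- apply abs_RInt_le_const; [exact Hac | | exact Hn].
  apply (ex_RInt_minus (V := R_NormedModule)); [apply Hk | exact Hf].
- unfold e. apply (Rmult_lt_reg_r (c - a + 1)); [lra |].
  replace ((c - a) * (eps / (c - a + 1)) * (c - a + 1)) with ((c - a) * eps) by (field; lra).
  nra.
Qed.

Lemma ode_rhs_le (v : R -> R) (x y : R) : 0 <= y -> 0 <= v x -> ode_rhs v x y <= y.
Proof.
intros Hy Hv. unfold ode_rhs. rewrite <- (sqrt_pow2 y Hy) at 2. apply sqrt_le_1_alt. lra.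
Qed.

Lemma ode_rhs_le_compat (v : R -> R) (x y1 y2 : R) : 0 <= y1 <= y2 ->
  ode_rhs v x y1 <= ode_rhs v x y2.
Proof. intros Hy. unfold ode_rhs. apply sqrt_le_1_alt. nra. Qed.

Lemma ode_rhs_sub_le (v : R -> R) (x y1 y2 : R) : 0 <= y1 <= y2 ->
  ode_rhs v x y2 - ode_rhs v x y1 <= sqrt ((y2 - y1) * (y2 + y1)).
Proof.
intros Hy. unfold ode_rhs.
replace ((y2 - y1) * (y2 + y1)) with (y2 ^ 2 - v x - (y1 ^ 2 - v x)) by ring.
apply sqrt_sub_le. nra.
Qed.

Lemma exists_sq_exp_lt (v : R -> R) (phi0 K : R) :
  is_lim (fun x => v x * exp (- (2 * x))) p_infty p_infty ->
  exists x, phi0 < x /\ (K * exp (x - phi0)) ^ 2 < v x.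
Proof.
intros Hgrowth.
set (C := K ^ 2 * exp (- (2 * phi0))).
destruct (Hgrowth (fun y => C < y) (ex_intro _ C (fun y Hy => Hy))) as [N HN].
set (x := Rmax phi0 N + 1).
assert (Hx : phi0 < x /\ N < x) by (unfold x; generalize (Rmax_l phi0 N) (Rmax_r phi0 N); lra).
exists x. split; [apply Hx |].
specialize (HN x (proj2 Hx)). cbv beta in HN.
replace ((K * exp (x - phi0)) ^ 2) with (C * exp (2 * x)).
2: { unfold C. replace (x - phi0) with (x + - phi0) by ring.
     replace (- (2 * phi0)) with (- phi0 + - phi0) by ring.
     replace (2 * x) with (x + x) by ring. rewrite !exp_plus. ring. }
apply (Rmult_lt_compat_r (exp (2 * x))) in HN; [| apply exp_pos].
rewrite Rmult_assoc, <- exp_plus in HN.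
replace (- (2 * x) + 2 * x) with 0 in HN by ring. rewrite exp_0, Rmult_1_r in HN. exact HN.
Qed.

Lemma no_typeB (phi0 : R) (v : R -> R) :
  (forall x, phi0 <= x -> 0 < v x) ->
  is_lim (fun x => v x * exp (- (2 * x))) p_infty p_infty ->
  forall h, ~ typeB v phi0 h.
Proof.
intros Hpos Hgrowth h [Hright [Hd Hgt]].
assert (Hh_nonneg : forall x, phi0 <= x -> 0 <= h x)
  by (intros x Hx; apply (Rle_trans _ (sqrt (v x))); [apply sqrt_pos | apply Rlt_le, Hgt, Hx]).
destruct (exists_sq_exp_lt v phi0 (h phi0) Hgrowth) as [x [Hx Hvx]].
assert (Hhx : h x <= h phi0 * exp (x - phi0)).
{ apply (le_exp_of_derive_le h (fun s => ode_rhs v s (h s)) phi0 x Hx Hright).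
  - apply (ex_derive_continuous h). eexists. apply Hd, Hx.
  - intros s Hs. split; [apply Hd; lra |].
    apply ode_rhs_le; [apply Hh_nonneg | apply Rlt_le, Hpos]; lra. }
assert (Hsq : v x < h x ^ 2).
{ apply sqrt_lt_0_alt. rewrite sqrt_pow2 by (apply Hh_nonneg; lra). apply Hgt. lra. }
assert (h x ^ 2 <= (h phi0 * exp (x - phi0)) ^ 2)
  by (apply pow_incr; split; [apply Hh_nonneg; lra | exact Hhx]).
lra.
Qed.

Section PicardIteration.

Variables (v : R -> R) (a b h0 : R).
Hypothesis Hab : a < b.
Hypothesis Hh0 : 0 < h0.
Hypothesis Hv_cont : forall x, a <= x <= b -> continuous v x.
Hypothesis Hv_pos : forall x, a <= x <= b -> 0 < v x.

Definition clamp (x : R) : R := Rmax a (Rmin x b).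

Lemma clamp_in (x : R) : a <= clamp x <= b.
Proof. unfold clamp, Rmax, Rmin. repeat destruct Rle_dec; lra. Qed.

Lemma clamp_id (x : R) : a <= x <= b -> clamp x = x.
Proof. intros. unfold clamp, Rmax, Rmin. repeat destruct Rle_dec; lra. Qed.

Lemma clamp_lipschitz : lipschitz clamp 1.
Proof.
intros x y. rewrite Rmult_1_l. unfold clamp, Rmax, Rmin, Rabs.
repeat destruct Rle_dec; repeat destruct Rcase_abs; lra.
Qed.

Lemma v_clamp_continuous (x : R) : continuous (fun s => v (clamp s)) x.
Proof.
apply (continuous_comp clamp v); [exact (lipschitz_continuous _ _ x clamp_lipschitz) |].
apply Hv_cont, clamp_in.
Qed.

(* Freezing the field outside [a, b] makes every iterate continuous on all of R. *)
Definition field (s y : R) : R := ode_rhs v (clamp s) y.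

Lemma field_continuous (g : R -> R) : (forall s, continuous g s) ->
  forall s, continuous (fun s => field s (g s)) s.
Proof.
intros Hg s. unfold field, ode_rhs.
apply (continuous_comp (fun s => g s ^ 2 - v (clamp s)) sqrt); [| apply continuous_sqrt].
apply (continuous_minus (fun s => g s ^ 2) (fun s => v (clamp s))); [| apply v_clamp_continuous].
apply (continuous_comp g (fun y => y ^ 2)); [apply Hg |].
apply (ex_derive_continuous (fun y => y ^ 2)). auto_derive. auto.
Qed.

Lemma field_le (s y : R) : 0 <= y -> field s y <= y.
Proof. intros Hy. apply ode_rhs_le; [exact Hy | apply Rlt_le, Hv_pos, clamp_in]. Qed.

Fixpoint picard (n : nat) (x : R) : R :=
  match n with
  | O => h0
  | S n => h0 + RInt (fun s => field s (picard n s)) a (clamp x)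
  end.

Let B := h0 * exp (b - a).

Lemma B_pos : 0 < B.
Proof. apply Rmult_lt_0_compat; [exact Hh0 | apply exp_pos]. Qed.

Lemma picard_continuous (n : nat) (x : R) : continuous (picard n) x.
Proof.
revert x. induction n as [| n IH]; intros x; [apply continuous_const |].
apply (continuous_comp clamp (fun y => h0 + RInt (fun s => field s (picard n s)) a y)).
- exact (lipschitz_continuous _ _ x clamp_lipschitz).
- apply (ex_derive_continuous (fun y => h0 + RInt (fun s => field s (picard n s)) a y)).
  eexists. apply is_derive_plus_RInt, field_continuous, IH.
Qed.

Lemma ex_RInt_field_picard (n : nat) (c d : R) : ex_RInt (fun s => field s (picard n s)) c d.
Proof.
apply (ex_RInt_continuous (V := R_CompleteNormedModule)). intros.
apply field_continuous, picard_continuous.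
Qed.

Lemma picard_clamp (n : nat) (x : R) : picard n (clamp x) = picard n x.
Proof.
destruct n as [| n]; [reflexivity |]. simpl.
rewrite (clamp_id (clamp x)) by apply clamp_in. reflexivity.
Qed.

Lemma picard_at_a (n : nat) : picard n a = h0.
Proof.
destruct n as [| n]; [reflexivity |]. simpl. rewrite clamp_id by lra. rewrite RInt_point.
change (h0 + 0 = h0). ring.
Qed.

Lemma picard_derive (n : nat) (x : R) : a < x < b ->
  is_derive (picard (S n)) x (field x (picard n x)).
Proof.
intros Hx.
apply (is_derive_ext_loc (fun y => h0 + RInt (fun s => field s (picard n s)) a y)).
- apply (locally_interval _ x a b); [apply Hx | apply Hx |].
  intros y Hay Hyb. simpl. rewrite (clamp_id y); [reflexivity | simpl in *; lra].
- apply (is_derive_plus_RInt (fun s => field s (picard n s))).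
  apply field_continuous, picard_continuous.
Qed.

Lemma picard_incr (n : nat) (x : R) : h0 <= picard n x <= picard (S n) x.
Proof.
revert x. induction n as [| n IH]; intros x.
- change (h0 <= h0 <= h0 + RInt (fun s => field s h0) a (clamp x)). split; [lra |].
  enough (0 <= RInt (fun s => field s h0) a (clamp x)) by lra.
  apply RInt_ge_0; [apply clamp_in | apply (ex_RInt_field_picard 0) |].
  intros; apply sqrt_pos.
- split; [generalize (IH x); lra |].
  change (h0 + RInt (fun s => field s (picard n s)) a (clamp x)
    <= h0 + RInt (fun s => field s (picard (S n) s)) a (clamp x)).
  apply Rplus_le_compat_l.
  apply RInt_le; [apply clamp_in | apply ex_RInt_field_picard | apply ex_RInt_field_picard |].
  intros s _. unfold field. apply ode_rhs_le_compat. generalize (IH s). lra.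
Qed.

Lemma picard_le_B (n : nat) (x : R) : picard n x <= B.
Proof.
assert (HB : h0 <= B).
{ unfold B. rewrite <- (Rmult_1_r h0) at 1. apply Rmult_le_compat_l; [lra |].
  rewrite <- exp_0. apply Rlt_le, exp_increasing. lra. }
destruct n as [| n]; [exact HB |].
rewrite <- picard_clamp. generalize (clamp_in x). set (y := clamp x). intros Hy.
destruct (Req_dec y a) as [-> | Hya]; [rewrite picard_at_a; exact HB |].
apply (Rle_trans _ (h0 * exp (y - a))).
- rewrite <- (picard_at_a (S n)).
  apply (le_exp_of_derive_le (picard (S n)) (fun s => field s (picard n s)) a y);
    [lra | | apply picard_continuous |].
  + exact (filterlim_filter_le_1 _ (filter_le_within _) (picard_continuous (S n) a)).
  + intros s Hs. split; [apply picard_derive; lra |].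
    apply (Rle_trans _ (picard n s)); [apply field_le | ]; generalize (picard_incr n s); lra.
- unfold B. apply Rmult_le_compat_l; [lra |].
  destruct (Req_dec y b) as [-> | Hyb]; [lra | apply Rlt_le, exp_increasing; lra].
Qed.

Lemma picard_lipschitz (n : nat) : lipschitz (picard n) B.
Proof.
intros x y. destruct n as [| n].
- simpl. rewrite Rminus_eq_0, Rabs_R0.
  apply Rmult_le_pos; [apply Rlt_le, B_pos | apply Rabs_pos].
- simpl. replace (h0 + RInt (fun s => field s (picard n s)) a (clamp x)
     - (h0 + RInt (fun s => field s (picard n s)) a (clamp y)))
    with (RInt (fun s => field s (picard n s)) a (clamp x)
          - RInt (fun s => field s (picard n s)) a (clamp y)) by ring.
  apply (Rle_trans _ (B * Rabs (clamp x - clamp y))).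
  + apply RInt_lipschitz; [apply field_continuous, picard_continuous |].
    intros s. assert (H := picard_incr n s). rewrite Rabs_pos_eq by apply sqrt_pos.
    apply (Rle_trans _ (picard n s)); [apply field_le; lra | apply picard_le_B].
  + apply Rmult_le_compat_l; [apply Rlt_le, B_pos |].
    generalize (clamp_lipschitz x y). lra.
Qed.

Definition sol (x : R) : R := real (Lim_seq (fun n => picard n x)).

Lemma is_lim_seq_picard (x : R) : is_lim_seq (fun n => picard n x) (sol x).
Proof.
assert (Hincr : forall n, picard n x <= picard (S n) x) by (intros n; apply picard_incr).
assert (Hlim := Lim_seq_correct _ (ex_lim_seq_incr _ Hincr)).
assert (Hup := is_lim_seq_le _ _ _ _ (fun n => picard_le_B n x) Hlim (is_lim_seq_const B)).
assert (Hlow := is_lim_seq_le _ _ _ _ (fun n => proj1 (picard_incr n x))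
  (is_lim_seq_const h0) Hlim).
unfold sol. destruct (Lim_seq (fun n => picard n x)); simpl in *; easy.
Qed.

Lemma picard_le_sol (n : nat) (x : R) : picard n x <= sol x.
Proof. apply (is_lim_seq_incr_compare _ _ (is_lim_seq_picard x)). intros; apply picard_incr. Qed.

Lemma sol_le_B (x : R) : sol x <= B.
Proof.
exact (is_lim_seq_le _ _ _ _ (fun n => picard_le_B n x) (is_lim_seq_picard x)
  (is_lim_seq_const B)).
Qed.

Lemma sol_continuous (x : R) : continuous sol x.
Proof.
apply (lipschitz_continuous _ B).
exact (lipschitz_of_pointwise_lim _ _ _ picard_lipschitz is_lim_seq_picard).
Qed.

Lemma field_picard_unif_cvg :
  unif_cvg_on (fun n s => field s (picard n s)) (fun s => field s (sol s)) a b.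
Proof.
intros eps Heps.
assert (HB := B_pos).
assert (Hd : 0 < eps ^ 2 / (2 * B)) by (apply Rdiv_lt_0_compat; nra).
assert (Hunif := unif_cvg_on_equilipschitz _ _ _ a b picard_lipschitz
  (lipschitz_of_pointwise_lim _ _ _ picard_lipschitz is_lim_seq_picard) is_lim_seq_picard).
(* sqrt is 1/2-Hoelder, so uniform convergence of the iterates carries over to the field. *)
eapply filter_imp; [| exact (Hunif _ Hd)]. intros n Hn s Hs.
specialize (Hn s Hs). cbv beta in Hn.
assert (Hp := picard_incr n s). assert (Hps := picard_le_sol n s).
assert (HsB := sol_le_B s).
assert (Hmono : field s (picard n s) <= field s (sol s))
  by (unfold field; apply ode_rhs_le_compat; lra).
rewrite Rabs_minus_sym, Rabs_pos_eq by lra.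
apply (Rle_trans _ _ _ (ode_rhs_sub_le v (clamp s) (picard n s) (sol s) ltac:(lra))).
rewrite <- (sqrt_pow2 eps) by lra. apply sqrt_le_1_alt.
rewrite Rabs_minus_sym, Rabs_pos_eq in Hn by lra.
apply (Rle_trans _ (eps ^ 2 / (2 * B) * (2 * B))).
- apply Rmult_le_compat; lra.
- right. field. lra.
Qed.

Lemma sol_integral (x : R) : sol x = h0 + RInt (fun s => field s (sol s)) a (clamp x).
Proof.
assert (Hc := clamp_in x).
assert (Hsol := proj1 (is_lim_seq_incr_1 _ _) (is_lim_seq_picard x)). cbv beta in Hsol.
assert (Hint : is_lim_seq (fun n => picard (S n) x)
  (h0 + RInt (fun s => field s (sol s)) a (clamp x))).
{ apply (is_lim_seq_plus' (fun _ => h0)); [apply is_lim_seq_const |].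
  apply is_lim_seq_RInt_unif; [apply Hc | intros; apply ex_RInt_field_picard | |].
  - apply (ex_RInt_continuous (V := R_CompleteNormedModule)). intros.
    apply field_continuous, sol_continuous.
  - intros eps Heps. eapply filter_imp; [| exact (field_picard_unif_cvg eps Heps)].
    intros n Hn s Hs. apply Hn. lra. }
assert (E := is_lim_seq_unique _ _ Hsol). rewrite (is_lim_seq_unique _ _ Hint) in E.
injection E. auto.
Qed.

Lemma sol_at_a : sol a = h0.
Proof.
rewrite sol_integral, clamp_id by lra. rewrite RInt_point. change (h0 + 0 = h0). ring.
Qed.

Lemma sol_derive (x : R) : a < x < b -> is_derive sol x (ode_rhs v x (sol x)).
Proof.
intros Hx.
apply (is_derive_ext_loc (fun y => h0 + RInt (fun s => field s (sol s)) a y)).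
- apply (locally_interval _ x a b); [apply Hx | apply Hx |].
  intros y Hay Hyb. rewrite (sol_integral y), (clamp_id y); [reflexivity | simpl in *; lra].
- replace (ode_rhs v x (sol x)) with (field x (sol x))
    by (unfold field; rewrite clamp_id by lra; reflexivity).
  apply (is_derive_plus_RInt (fun s => field s (sol s))).
  apply field_continuous, sol_continuous.
Qed.

Lemma exists_typeA_solution : sqrt (v a) < h0 -> B ^ 2 < v b ->
  exists h phi1, h a = h0 /\ typeA v a h phi1.
Proof.
intros Hstart Hend.
set (D := fun y => sol y - sqrt (v (clamp y))).
assert (HD : forall y, continuous D y).
{ intros y. apply (continuous_minus sol (fun y => sqrt (v (clamp y)))); [apply sol_continuous |].
  apply (continuous_comp (fun y => v (clamp y)) sqrt);
    [apply v_clamp_continuous | apply continuous_sqrt]. }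
assert (HDa : 0 < D a) by (unfold D; rewrite sol_at_a, clamp_id by lra; lra).
assert (HDb : D b < 0).
{ unfold D. rewrite clamp_id by lra.
  assert (B < sqrt (v b)).
  { rewrite <- (sqrt_pow2 B) by apply Rlt_le, B_pos. apply sqrt_lt_1_alt.
    split; [apply pow2_ge_0 | exact Hend]. }
  generalize (sol_le_B b). lra. }
destruct (exists_first_root D a b Hab (fun y _ => HD y) HDa HDb) as [m [Hm [HDm Hbelow]]].
exists sol, m. split; [exact sol_at_a |].
unfold typeA. split; [apply Hm |]. split; [| split; [| split; [| split]]].
- exact (filterlim_filter_le_1 _ (filter_le_within _) (sol_continuous a)).
- exact (filterlim_filter_le_1 _ (filter_le_within _) (sol_continuous m)).
- intros x Hx. apply sol_derive. lra.
- intros x Hx. generalize (Hbelow x Hx). unfold D. rewrite clamp_id by lra. lra.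
- revert HDm. unfold D. rewrite clamp_id by lra. lra.
Qed.

End PicardIteration.

Theorem proposition5 (phi0 : R) (v : R -> R)
  (Hsmooth : smooth_from v phi0)
  (Hpos : forall x, phi0 <= x -> 0 < v x)
  (Hder : forall x, phi0 <= x -> 0 < Derive v x)
  (Hgrowth : is_lim (fun x => v x * exp (- (2 * x))) p_infty p_infty) :
  (forall h0, sqrt (v phi0) < h0 ->
     exists h phi1, h phi0 = h0 /\ typeA v phi0 h phi1) /\
  (forall h, ~ typeB v phi0 h) /\
  ~ has_separatrix v phi0.
Proof.
assert (Hcont : forall x, phi0 <= x -> continuous v x)
  by (intros x Hx; apply (ex_derive_continuous v), (Hsmooth 0%nat x Hx)).
split; [| split].
- intros h0 Hh0.
  assert (Hh0_pos : 0 < h0) by (generalize (sqrt_pos (v phi0)); lra).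
  destruct (exists_sq_exp_lt v phi0 h0 Hgrowth) as [b [Hb Hvb]].
  apply (exists_typeA_solution v phi0 b h0 Hb Hh0_pos); [| | exact Hh0 | exact Hvb].
  + intros x Hx. apply Hcont. lra.
  + intros x Hx. apply Hpos. lra.
- exact (no_typeB phi0 v Hpos Hgrowth).
- intros [_ [[h HB] _]]. exact (no_typeB phi0 v Hpos Hgrowth h HB).
Qed.
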